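(* Let $f,g:[a,b]\to[0,\infty)$, $0\le a<b$, be convex functions with $f,g\in L^1[a,b]$. Then \[ \frac{1}{b-a}\int_a^b f(x)^{\frac{x-a}{b-a}}\, g(x)^{\frac{b-x}{b-a}}\,dx \le \frac13\left[f(b)+g(a)\right]+\frac16\left[g(b)+f(a)\right]. \]
   Context: The convention $0^0=1$ is used in the integrand. *)

From Stdlib Require Export Reals.
Open Scope R_scope.

(* Real power x^y for x >= 0 with the convention 0^0 = 1 (and 0^y = 0 for y <> 0).
   For x > 0 this is Rpower x y = exp (y * ln x). *)
Definition rpow0 (x y : R) : R :=
  if Req_EM_T x 0 then (if Req_EM_T y 0 then 1 else 0) else Rpower x y.

Definition convex_on (a b : R) (f : R -> R) : Prop :=
  forall x y t, a <= x <= b -> a <= y <= b -> 0 <= t <= 1 ->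
    f (t * x + (1 - t) * y) <= t * f x + (1 - t) * f y.

Definition integrand (a b : R) (f g : R -> R) (x : R) : R :=
  rpow0 (f x) ((x - a) / (b - a)) * rpow0 (g x) ((b - x) / (b - a)).

From Stdlib Require Import Reals Lra Lia RList RiemannInt_SF.
From Coquelicot Require Import Coquelicot.
Open Scope R_scope.

(** With t = (x-a)/(b-a), the weighted
    AM-GM inequality u^t v^(1-t) <= t u + (1-t) v and the chord bounds
    f x <= (1-t) f a + t f b, g x <= (1-t) g a + t g b dominate the integrand
    by a polynomial in t (the [majorant]), whose integral is computed exactly
    by the fundamental theorem of calculus and equals (b-a) times the
    right-hand side.

    The other half of the work is the existence of the Riemann integral of the
    integrand: convex functions are
    continuous in the interior of [a,b], so the integrand is continuous on
    (a,b); being also bounded, it is integrable on [a,b] even though f and g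
    may jump at the endpoints. *)

Lemma rpow0_nonneg x y : 0 <= rpow0 x y.
Proof.
  unfold rpow0; destruct (Req_EM_T x 0); [destruct (Req_EM_T y 0); lra|].
  left; apply exp_pos.
Qed.

Lemma rpow0_pos_base x y : 0 < x -> rpow0 x y = Rpower x y.
Proof. intros; unfold rpow0; destruct (Req_EM_T x 0); [lra | easy]. Qed.

Lemma rpow0_zero_base y : y <> 0 -> rpow0 0 y = 0.
Proof.
  intros; unfold rpow0; destruct (Req_EM_T 0 0); [|lra].
  destruct (Req_EM_T y 0); lra.
Qed.

Lemma rpow0_exp0 x : 0 <= x -> rpow0 x 0 = 1.
Proof.
  intros; unfold rpow0; destruct (Req_EM_T x 0); [destruct (Req_EM_T 0 0); lra|].
  apply Rpower_O; lra.
Qed.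

Lemma rpow0_exp1 x : 0 <= x -> rpow0 x 1 = x.
Proof.
  intros; unfold rpow0; destruct (Req_EM_T x 0); [destruct (Req_EM_T 1 0); lra|].
  apply Rpower_1; lra.
Qed.

(* Tangent-line bound of the concave logarithm, the source of AM-GM. *)
Lemma ln_le_sub1 y : 0 < y -> ln y <= y - 1.
Proof. intros; pose proof (exp_ineq1_le (ln y)); rewrite exp_ln in *; lra. Qed.

(* For positive u, v: apply [ln_le_sub1] to u/m and v/m, m the arithmetic mean,
   and combine with weights t and 1-t. *)
Lemma weighted_amgm_pos u v t : 0 < u -> 0 < v -> 0 <= t <= 1 ->
  Rpower u t * Rpower v (1 - t) <= t * u + (1 - t) * v.
Proof.
  intros hu hv ht. set (m := t * u + (1 - t) * v).
  assert (hm : 0 < m) by (unfold m; nra).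
  unfold Rpower; rewrite <- exp_plus, <- (exp_ln m) by lra.
  assert (hlu : ln (u * / m) <= u * / m - 1)
    by (apply ln_le_sub1, Rmult_lt_0_compat, Rinv_0_lt_compat; lra).
  assert (hlv : ln (v * / m) <= v * / m - 1)
    by (apply ln_le_sub1, Rmult_lt_0_compat, Rinv_0_lt_compat; lra).
  rewrite ln_mult, ln_Rinv in hlu, hlv by (try apply Rinv_0_lt_compat; lra).
  assert (hmean : t * (u * / m - 1) + (1 - t) * (v * / m - 1) = 0)
    by (unfold m in *; field; lra).
  assert (hlog : t * ln u + (1 - t) * ln v <= ln m) by nra.
  destruct hlog as [hlt | ->]; [left; apply exp_increasing, hlt | lra].
Qed.

Lemma weighted_amgm u v t : 0 <= u -> 0 <= v -> 0 <= t <= 1 ->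
  rpow0 u t * rpow0 v (1 - t) <= t * u + (1 - t) * v.
Proof.
  intros hu hv ht.
  destruct (Req_dec t 0) as [->|t0].
  { rewrite rpow0_exp0, Rminus_0_r, rpow0_exp1; lra. }
  destruct (Req_dec t 1) as [->|t1].
  { rewrite Rminus_diag, rpow0_exp0, rpow0_exp1; lra. }
  destruct (Req_dec u 0) as [->|u0].
  { rewrite rpow0_zero_base by easy. pose proof (rpow0_nonneg v (1 - t)). nra. }
  destruct (Req_dec v 0) as [->|v0].
  { rewrite (rpow0_zero_base (1 - t)) by lra. pose proof (rpow0_nonneg u t). nra. }
  rewrite !rpow0_pos_base by lra. apply weighted_amgm_pos; lra.
Qed.

Lemma convex_three_point a b f u v w : convex_on a b f ->
  a <= u -> u <= v <= w -> w <= b ->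
  (w - u) * f v <= (w - v) * f u + (v - u) * f w.
Proof.
  intros hc hu huvw hw.
  destruct (Req_dec u w) as [<-|huw].
  { replace v with u by lra. lra. }
  assert (hlt : u < w) by lra.
  set (t := (w - v) / (w - u)).
  assert (ht : 0 <= t <= 1).
  { unfold t; split; [apply Rdiv_le_0_compat | apply (Rdiv_le_1 (w - v))]; lra. }
  assert (hv : v = t * u + (1 - t) * w) by (unfold t; field; lra).
  assert (hconv := hc u w t ltac:(lra) ltac:(lra) ht). rewrite <- hv in hconv.
  assert (ht' : (w - u) * t = w - v) by (unfold t; field; lra).
  assert (hw' : (w - u) * (1 - t) = v - u) by (unfold t; field; lra).
  rewrite <- ht', <- hw'.
  replace ((w - u) * t * f u + (w - u) * (1 - t) * f w)
    with ((w - u) * (t * f u + (1 - t) * f w)) by ring.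
  apply Rmult_le_compat_l; lra.
Qed.

Lemma convex_local_lipschitz a b f M x y d : convex_on a b f ->
  (forall z, a <= z <= b -> 0 <= f z <= M) ->
  a <= x - d -> x + d <= b -> Rabs (y - x) <= d ->
  d * Rabs (f y - f x) <= M * Rabs (y - x).
Proof.
  intros hc hb hl hr hyx. apply Rabs_le_between in hyx.
  rewrite <- (Rabs_right d), <- Rabs_mult by lra.
  assert (hxl := hb (x - d) ltac:(lra)). assert (hxr := hb (x + d) ltac:(lra)).
  assert (hx := hb x ltac:(lra)). assert (hy := hb y ltac:(lra)).
  destruct (Rle_dec x y) as [hle | hlt].
  - assert (up := convex_three_point a b f x y (x + d) hc ltac:(lra) ltac:(lra) ltac:(lra)).
    assert (down := convex_three_point a b f (x - d) x y hc ltac:(lra) ltac:(lra) ltac:(lra)).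
    rewrite (Rabs_right (y - x)) by lra.
    apply Rabs_le; split; nra.
  - assert (up := convex_three_point a b f (x - d) y x hc ltac:(lra) ltac:(lra) ltac:(lra)).
    assert (down := convex_three_point a b f y x (x + d) hc ltac:(lra) ltac:(lra) ltac:(lra)).
    rewrite (Rabs_left (y - x)) by lra.
    apply Rabs_le; split; nra.
Qed.

Lemma continuity_pt_eps f x : continuity_pt f x <->
  forall eps, 0 < eps -> exists del, 0 < del /\
    forall y, Rabs (y - x) < del -> Rabs (f y - f x) < eps.
Proof.
  split.
  - intros hc eps heps. destruct (hc eps heps) as [del [hdel hy]].
    exists del; split; [easy|]. intros y hyx.
    destruct (Req_dec y x) as [->|hne].
    + rewrite Rminus_diag, Rabs_R0; easy.
    + apply (hy y); split; [split; [exact I | easy] | easy].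
  - intros h eps heps. destruct (h eps heps) as [del [hdel hy]].
    exists del; split; [easy|]. intros y [_ hyx]. apply hy, hyx.
Qed.

Lemma convex_continuous a b f M x : convex_on a b f ->
  (forall z, a <= z <= b -> 0 <= f z <= M) -> a < x < b -> continuity_pt f x.
Proof.
  intros hc hb hx. set (d := Rmin (x - a) (b - x)).
  assert (hd : 0 < d) by (unfold d; apply Rmin_glb_lt; lra).
  assert (hdl : d <= x - a) by apply Rmin_l. assert (hdr : d <= b - x) by apply Rmin_r.
  assert (hM : 0 <= M) by (destruct (hb x); lra).
  apply continuity_pt_eps; intros eps heps.
  exists (Rmin d (eps * d / (M + 1))). split.
  { apply Rmin_glb_lt; [easy | apply Rdiv_lt_0_compat; nra]. }
  intros y hy.
  assert (hy1 : Rabs (y - x) < d) by (eapply Rlt_le_trans; [apply hy | apply Rmin_l]).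
  assert (hy2 : Rabs (y - x) < eps * d / (M + 1))
    by (eapply Rlt_le_trans; [apply hy | apply Rmin_r]).
  assert (hlip := convex_local_lipschitz a b f M x y d hc hb ltac:(lra) ltac:(lra) ltac:(lra)).
  assert (hy2' : (M + 1) * Rabs (y - x) < eps * d).
  { apply Rmult_lt_compat_l with (r := M + 1) in hy2; [|lra].
    replace ((M + 1) * (eps * d / (M + 1))) with (eps * d) in hy2 by (field; lra). easy. }
  pose proof (Rabs_pos (y - x)). pose proof (Rabs_pos (f y - f x)). nra.
Qed.

Lemma rpow0_small u t sig e : 0 < sig <= t -> 0 < e < 1 -> 0 <= u < Rpower e (/ sig) ->
  rpow0 u t < e.
Proof.
  intros hsig he hu.
  destruct (Req_dec u 0) as [->|hu0]; [rewrite rpow0_zero_base; lra|].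
  rewrite rpow0_pos_base by lra.
  assert (hlnu : ln u < ln e / sig).
  { unfold Rpower in hu. replace (ln e / sig) with (/ sig * ln e) by (field; lra).
    rewrite <- (ln_exp (/ sig * ln e)). apply ln_increasing; lra. }
  assert (hlne : ln e < 0) by (rewrite <- ln_1; apply ln_increasing; lra).
  assert (hsl : sig * ln u < ln e).
  { replace (ln e) with (sig * (ln e / sig)) by (field; lra).
    apply Rmult_lt_compat_l; lra. }
  assert (hlnu0 : ln u < 0).
  { apply Rlt_trans with (ln e / sig); [easy|].
    apply Rmult_lt_reg_l with sig; [lra|]. replace (sig * (ln e / sig)) with (ln e) by (field; lra). lra. }
  unfold Rpower. rewrite <- (exp_ln e) by lra.
  apply exp_increasing. nra.
Qed.

Lemma continuity_rpow0_zero_base (h s : R -> R) x r : 0 < r ->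
  (forall y, Rabs (y - x) < r -> 0 <= h y) -> h x = 0 ->
  continuity_pt h x -> continuity_pt s x -> 0 < s x ->
  continuity_pt (fun y => rpow0 (h y) (s y)) x.
Proof.
  intros hr hpos hx0 ch cs hsx.
  apply continuity_pt_eps; intros eps heps.
  set (e := Rmin eps (/ 2)).
  assert (he : 0 < e < 1 /\ e <= eps).
  { unfold e; repeat split; [apply Rmin_glb_lt; lra | | apply Rmin_l].
    pose proof (Rmin_r eps (/ 2)); lra. }
  set (sig := s x / 2).
  assert (heta : 0 < Rpower e (/ sig)) by apply exp_pos.
  destruct (proj1 (continuity_pt_eps s x) cs sig ltac:(unfold sig; lra)) as [r1 [hr1 hs]].
  destruct (proj1 (continuity_pt_eps h x) ch _ heta) as [r2 [hr2 hh]].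
  exists (Rmin r (Rmin r1 r2)). split.
  { repeat apply Rmin_glb_lt; easy. }
  intros y hy.
  assert (hyr : Rabs (y - x) < r /\ Rabs (y - x) < r1 /\ Rabs (y - x) < r2).
  { pose proof (Rmin_l r (Rmin r1 r2)). pose proof (Rmin_r r (Rmin r1 r2)).
    pose proof (Rmin_l r1 r2). pose proof (Rmin_r r1 r2). lra. }
  destruct hyr as [hyr [hyr1 hyr2]].
  specialize (hs y hyr1). specialize (hh y hyr2). specialize (hpos y hyr).
  apply Rabs_lt_between in hs.
  rewrite hx0, Rminus_0_r, Rabs_right in hh by lra.
  rewrite hx0, (rpow0_zero_base (s x)), Rminus_0_r, Rabs_right
    by (try apply Rle_ge, rpow0_nonneg; lra).
  apply Rlt_le_trans with e; [apply (rpow0_small _ _ sig) | ]; unfold sig in *; lra.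
Qed.

Lemma continuity_rpow0 (h s : R -> R) x r : 0 < r ->
  (forall y, Rabs (y - x) < r -> 0 <= h y) ->
  continuity_pt h x -> continuity_pt s x -> 0 < s x ->
  continuity_pt (fun y => rpow0 (h y) (s y)) x.
Proof.
  intros hr hpos ch cs hsx.
  assert (hx0 : 0 <= h x) by (apply hpos; rewrite Rminus_diag, Rabs_R0; lra).
  destruct (Req_dec (h x) 0) as [hz|hnz].
  { exact (continuity_rpow0_zero_base h s x r hr hpos hz ch cs hsx). }
  assert (hxpos : 0 < h x) by (destruct hx0; [easy | congruence]).
  destruct (proj1 (continuity_pt_eps h x) ch (h x / 2) ltac:(lra)) as [r1 [hr1 hh]].
  apply (continuity_pt_locally_ext (fun y => exp (s y * ln (h y))) _ r1); [easy | |].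
  - intros y hy. specialize (hh y hy). apply Rabs_lt_between in hh.
    rewrite rpow0_pos_base by lra. reflexivity.
  - apply (continuity_pt_comp (fun y => s y * ln (h y)) exp).
    + apply (continuity_pt_mult s (fun y => ln (h y))); [easy|].
      apply (continuity_pt_comp h ln); [easy|].
      apply derivable_continuous_pt. exists (/ h x). apply derivable_pt_lim_ln; lra.
    + apply derivable_continuous_pt, derivable_pt_exp.
Qed.

Lemma stepfun_ext_open (f g : R -> R) a b : a <= b -> IsStepFun f a b ->
  (forall x, a < x < b -> f x = g x) -> IsStepFun g a b.
Proof.
  intros hab [l [lf [hord [hfirst [hlast [hlen hconst]]]]]] he.
  exists l, lf. repeat split; try easy.
  intros i hi x hx. rewrite <- he; [now apply hconst|].
  rewrite Rmin_left in hfirst by lra. rewrite Rmax_right in hlast by lra.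
  (* each open piece of the subdivision lies inside (a,b) *)
  assert (q1 : pos_Rl l 0 <= pos_Rl l i) by (apply (proj1 (RList_P6 l) hord); lia).
  assert (q2 : pos_Rl l (S i) <= pos_Rl l (pred (length l)))
    by (apply (proj1 (RList_P6 l) hord); lia).
  destruct hx; lra.
Qed.

Lemma RiemannInt_SF_ext_open a b (f g : StepFun a b) : a <= b ->
  (forall x, a < x < b -> f x = g x) -> RiemannInt_SF f = RiemannInt_SF g.
Proof.
  intros hab he.
  apply Rle_antisym; apply StepFun_P37; try easy; intros x hx; rewrite he; lra.
Qed.

Definition pad (c d v : R) (h : R -> R) (x : R) : R :=
  if Rle_dec x c then v else if Rle_dec d x then v else h x.

Lemma pad_pieces a c d b v (h : StepFun c d) : a <= c -> c <= d -> d <= b ->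
  (IsStepFun (pad c d v h) a c * IsStepFun (pad c d v h) c d * IsStepFun (pad c d v h) d b)%type.
Proof.
  intros hac hcd hdb. repeat split.
  - apply (stepfun_ext_open (fct_cte v)); [easy | apply StepFun_P4 |].
    intros x hx. unfold pad, fct_cte. destruct (Rle_dec x c); lra.
  - apply (stepfun_ext_open h); [easy | apply pre |].
    intros x hx. unfold pad. destruct (Rle_dec x c); [lra|]. destruct (Rle_dec d x); [lra | easy].
  - apply (stepfun_ext_open (fct_cte v)); [easy | apply StepFun_P4 |].
    intros x hx. unfold pad, fct_cte. destruct (Rle_dec x c); [lra|]. destruct (Rle_dec d x); lra.
Qed.

Lemma pad_stepfun a c d b v (h : StepFun c d) : a <= c -> c <= d -> d <= b ->
  IsStepFun (pad c d v h) a b.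
Proof.
  intros hac hcd hdb. destruct (pad_pieces a c d b v h hac hcd hdb) as [[p1 p2] p3].
  exact (StepFun_P46 p1 (StepFun_P46 p2 p3)).
Qed.

Lemma pad_integral a c d b v (h : StepFun c d) (pr : IsStepFun (pad c d v h) a b) :
  a <= c -> c <= d -> d <= b ->
  RiemannInt_SF (mkStepFun pr) = v * (c - a) + RiemannInt_SF h + v * (b - d).
Proof.
  intros hac hcd hdb. destruct (pad_pieces a c d b v h hac hcd hdb) as [[p1 p2] p3].
  rewrite <- (StepFun_P43 p1 (StepFun_P46 p2 p3) pr), <- (StepFun_P43 p2 p3).
  rewrite <- (StepFun_P18 a c v), <- (StepFun_P18 d b v).
  rewrite !Rplus_assoc. f_equal; [|f_equal];
    apply RiemannInt_SF_ext_open; try easy; intros x hx; simpl; unfold pad, fct_cte;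
    destruct (Rle_dec x c); try lra; destruct (Rle_dec d x); lra.
Qed.

(* A function bounded by M on [a,b] and Riemann integrable on every compact
   subinterval of (a,b) is Riemann integrable on [a,b]: on the two edges of
   width dl the step functions 0 and M enclose it, at a cost 2 M dl. *)
Lemma integrable_of_interior (F : R -> R) a b M : a < b ->
  (forall x, a <= x <= b -> Rabs (F x) <= M) ->
  (forall c d, a < c -> c <= d -> d < b -> Riemann_integrable F c d) ->
  Riemann_integrable F a b.
Proof.
  intros hab hM hint eps.
  assert (M0 : 0 <= M) by (pose proof (hM a ltac:(lra)); pose proof (Rabs_pos (F a)); lra).
  pose proof (cond_pos eps) as heps.
  set (dl := Rmin ((b - a) / 3) (eps / (4 * (M + 1)))).
  assert (hdl : 0 < dl) by (apply Rmin_glb_lt; apply Rdiv_lt_0_compat; lra).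
  assert (hdl1 : dl <= (b - a) / 3) by apply Rmin_l.
  assert (hdl2 : (M + 1) * (4 * dl) <= eps).
  { assert (hr : dl <= eps / (4 * (M + 1))) by apply Rmin_r.
    replace (pos eps) with (4 * (M + 1) * (eps / (4 * (M + 1)))) by (field; lra). nra. }
  set (c := a + dl). set (d := b - dl).
  assert (hac : a <= c) by (unfold c; lra). assert (hcd : c <= d) by (unfold c, d; lra).
  assert (hdb : d <= b) by (unfold d; lra).
  assert (heps2 : 0 < eps / 2) by lra.
  destruct (hint c d ltac:(unfold c; lra) hcd ltac:(unfold d; lra) (mkposreal _ heps2))
    as [phi [psi [hF hpsi]]]; simpl in hpsi.
  rewrite Rmin_left, Rmax_right in hF by lra.
  exists (mkStepFun (pad_stepfun a c d b 0 phi hac hcd hdb)).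
  exists (mkStepFun (pad_stepfun a c d b M psi hac hcd hdb)).
  split.
  - intros t ht. rewrite Rmin_left, Rmax_right in ht by lra. simpl. unfold pad.
    destruct (Rle_dec t c); [|destruct (Rle_dec d t)]; try (rewrite Rminus_0_r; apply hM; lra).
    apply hF; lra.
  - rewrite pad_integral by easy.
    assert (hedges : M * (c - a) + M * (b - d) < eps / 2) by (unfold c, d; nra).
    assert (hedges0 : 0 <= M * (c - a) + M * (b - d)) by (unfold c, d; nra).
    apply Rabs_lt_between in hpsi. apply Rabs_lt_between. lra.
Qed.

Definition weight (a b x : R) : R := (x - a) / (b - a).

Definition majorant (a b : R) (f g : R -> R) (x : R) : R :=
  let t := weight a b x in
  t * ((1 - t) * f a + t * f b) + (1 - t) * ((1 - t) * g a + t * g b).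

Definition majorant_primitive (a b : R) (f g : R -> R) (x : R) : R :=
  let t := weight a b x in
  (b - a) * (f a * (t ^ 2 / 2 - t ^ 3 / 3) + f b * (t ^ 3 / 3)
             - g a * ((1 - t) ^ 3 / 3) + g b * (t ^ 2 / 2 - t ^ 3 / 3)).

Lemma weight_bounds a b x : a < b -> a <= x <= b -> 0 <= weight a b x <= 1.
Proof.
  intros hab hx; unfold weight.
  split; [apply Rdiv_le_0_compat | apply (Rdiv_le_1 (x - a))]; lra.
Qed.

Lemma convex_below_chord a b f x : convex_on a b f -> a < b -> a <= x <= b ->
  f x <= (1 - weight a b x) * f a + weight a b x * f b.
Proof.
  intros hc hab hx.
  assert (h3 := convex_three_point a b f a x b hc ltac:(lra) hx ltac:(lra)).
  unfold weight.
  replace ((1 - (x - a) / (b - a)) * f a + (x - a) / (b - a) * f b)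
    with (((b - x) * f a + (x - a) * f b) / (b - a)) by (field; lra).
  apply Rmult_le_reg_l with (b - a); [lra|].
  replace ((b - a) * (((b - x) * f a + (x - a) * f b) / (b - a)))
    with ((b - x) * f a + (x - a) * f b) by (field; lra).
  easy.
Qed.

Lemma integrand_le_majorant a b f g x : a < b ->
  (forall z, a <= z <= b -> 0 <= f z) -> (forall z, a <= z <= b -> 0 <= g z) ->
  convex_on a b f -> convex_on a b g -> a <= x <= b ->
  0 <= integrand a b f g x <= majorant a b f g x.
Proof.
  intros hab hf0 hg0 hfc hgc hx.
  assert (ht := weight_bounds a b x hab hx).
  assert (hf := convex_below_chord a b f x hfc hab hx).
  assert (hg := convex_below_chord a b g x hgc hab hx).
  assert (hexp : (b - x) / (b - a) = 1 - weight a b x) by (unfold weight; field; lra).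
  unfold integrand, majorant. fold (weight a b x). rewrite hexp.
  split; [apply Rmult_le_pos; apply rpow0_nonneg|].
  eapply Rle_trans; [apply weighted_amgm; auto|]. nra.
Qed.

Lemma majorant_integral a b f g : a < b ->
  is_RInt (majorant a b f g) a b ((b - a) * (/ 3 * (f b + g a) + / 6 * (g b + f a))).
Proof.
  intros hab.
  replace ((b - a) * (/ 3 * (f b + g a) + / 6 * (g b + f a)))
    with (minus (majorant_primitive a b f g b) (majorant_primitive a b f g a))
    by (unfold minus, plus, opp, majorant_primitive, weight; simpl; field; lra).
  apply (is_RInt_derive (majorant_primitive a b f g) (majorant a b f g)).
  - intros x _. unfold majorant_primitive, majorant, weight.
    auto_derive; [easy|]. field. lra.
  - intros x _. apply continuity_pt_filterlim, derivable_continuous_pt.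
    unfold majorant, weight. reg.
Qed.

(* Riemann integrability of the integrand: it is bounded, and continuous on
   (a,b) since convex functions are continuous there and both exponents are
   positive there; the possible jumps of f and g at a and b do not matter. *)
Lemma integrand_integrable a b f g : a < b ->
  (forall z, a <= z <= b -> 0 <= f z) -> (forall z, a <= z <= b -> 0 <= g z) ->
  convex_on a b f -> convex_on a b g ->
  Riemann_integrable (integrand a b f g) a b.
Proof.
  intros hab hf0 hg0 hfc hgc.
  assert (hfM : forall z, a <= z <= b -> 0 <= f z <= f a + f b).
  { intros z hz. pose proof (weight_bounds a b z hab hz).
    pose proof (convex_below_chord a b f z hfc hab hz).
    pose proof (hf0 a ltac:(lra)). pose proof (hf0 b ltac:(lra)). split; [auto | nra]. }
  assert (hgM : forall z, a <= z <= b -> 0 <= g z <= g a + g b).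
  { intros z hz. pose proof (weight_bounds a b z hab hz).
    pose proof (convex_below_chord a b g z hgc hab hz).
    pose proof (hg0 a ltac:(lra)). pose proof (hg0 b ltac:(lra)). split; [auto | nra]. }
  apply (integrable_of_interior _ a b (f a + f b + g a + g b)); [easy | |].
  - intros x hx. destruct (integrand_le_majorant a b f g x hab hf0 hg0 hfc hgc hx) as [h0 hP].
    rewrite Rabs_right by lra. eapply Rle_trans; [exact hP|].
    pose proof (weight_bounds a b x hab hx). pose proof (hfM a ltac:(lra)).
    pose proof (hfM b ltac:(lra)). pose proof (hgM a ltac:(lra)). pose proof (hgM b ltac:(lra)).
    unfold majorant. set (t := weight a b x) in *.
    assert (0 <= t * (1 - t) <= 1 /\ 0 <= t * t <= 1 /\ 0 <= (1 - t) * (1 - t) <= 1) by nra.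
    nra.
  - intros c d hc hcd hd. apply continuity_implies_RiemannInt; [easy|].
    intros x hx.
    set (r := Rmin (x - a) (b - x)).
    assert (hr : 0 < r) by (apply Rmin_glb_lt; lra).
    assert (hrx : forall y, Rabs (y - x) < r -> a <= y <= b).
    { intros y hy. apply Rabs_lt_between in hy.
      assert (r <= x - a) by apply Rmin_l. assert (r <= b - x) by apply Rmin_r. lra. }
    assert (hexp : forall k, continuity_pt (fun y => (y - k) / (b - a)) x /\
                             continuity_pt (fun y => (k - y) / (b - a)) x).
    { intros k; split; apply derivable_continuous_pt; reg. }
    apply (continuity_pt_mult (fun y => rpow0 (f y) ((y - a) / (b - a)))
                              (fun y => rpow0 (g y) ((b - y) / (b - a)))).
    + apply (continuity_rpow0 f _ x r hr); [auto | | apply hexp | apply Rdiv_lt_0_compat; lra].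
      apply (convex_continuous a b f (f a + f b)); auto; lra.
    + apply (continuity_rpow0 g _ x r hr); [auto | | apply hexp | apply Rdiv_lt_0_compat; lra].
      apply (convex_continuous a b g (g a + g b)); auto; lra.
Qed.

Theorem corollary1 (a b : R) (f g : R -> R)
  (hab : 0 <= a < b)
  (hf0 : forall x, a <= x <= b -> 0 <= f x)
  (hg0 : forall x, a <= x <= b -> 0 <= g x)
  (hfc : convex_on a b f) (hgc : convex_on a b g)
  (hfi : Riemann_integrable f a b) (hgi : Riemann_integrable g a b) :
  exists pr : Riemann_integrable (integrand a b f g) a b,
    / (b - a) * RiemannInt pr <= / 3 * (f b + g a) + / 6 * (g b + f a).
Proof.
  assert (hlt : a < b) by lra.
  set (pr := integrand_integrable a b f g hlt hf0 hg0 hfc hgc). exists pr.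
  assert (hP := majorant_integral a b f g hlt).
  assert (prP : Riemann_integrable (majorant a b f g) a b)
    by (apply ex_RInt_Reals_0; eexists; exact hP).
  assert (hle : RiemannInt pr <= RiemannInt prP).
  { apply RiemannInt_P19; [lra|]. intros x hx.
    apply (integrand_le_majorant a b f g x hlt hf0 hg0 hfc hgc); lra. }
  rewrite <- (RInt_Reals _ a b prP), (is_RInt_unique _ _ _ _ hP) in hle.
  set (rhs := / 3 * (f b + g a) + / 6 * (g b + f a)) in *.
  apply Rmult_le_compat_l with (r := / (b - a)) in hle; [|left; apply Rinv_0_lt_compat; lra].
  replace (/ (b - a) * ((b - a) * rhs)) with rhs in hle by (field; lra).
  exact hle.
Qed.
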